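(* Let $A$ be a unital C*-algebra and let $F\subseteq\Sigma_\ast$ be closed. Then $F$ is irreducible (i.e. whenever $F=F_1\cup F_2$ with $F_1,F_2$ closed, then $F=F_1$ or $F=F_2$) if and only if: (1) for every $C\in\mathcal C(A)$, if $F_C\ne\emptyset$ then $F_C$ is a singleton; and (2) for all $C_1,C_2\in\mathcal C(A)$ with $F_{C_1}\ne\emptyset$ and $F_{C_2}\ne\emptyset$, there is $C_3\in\mathcal C(A)$ with $C_1,C_2\subseteq C_3$ and $F_{C_3}\neq\emptyset$.
   Context: Let $A$ be a unital C*-algebra. $\mathcal C(A)$ is the poset (under inclusion) of commutative C*-subalgebras of $A$ containing the unit of $A$. For $C\in\mathcal C(A)$, $\Sigma_C$ is its Gelfand spectrum; for $C\subseteq C'$ and $\lambda'\in\Sigma_{C'}$, $\lambda'|_C$ is the restriction. Let $\Sigma=\{(C,\lambda)\mid C\in\mathcal C(A),\lambda\in\Sigma_C\}$ and $U_C=\{\lambda\mid(C,\lambda)\in U\}$ for $U\subseteq\Sigma$. The space $\Sigma_\ast$ is $\Sigma$ with the topology in which $U$ is open iff (1) each $U_C$ is open in $\Sigma_C$, and (2) if $\lambda\in U_C$, $C\subseteq C'$ and $\lambda'\in\Sigma_{C'}$ with $\lambda'|_C=\lambda$, then $\lambda'\in U_{C'}$. *)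

From Stdlib Require Import Reals List.
Open Scope R_scope.
Set Implicit Arguments.

Definition CC : Type := (R * R)%type.
Definition C0 : CC := (0, 0).
Definition C1 : CC := (1, 0).
Definition Cadd (z w : CC) : CC := (fst z + fst w, snd z + snd w).
Definition Cmul (z w : CC) : CC :=
  (fst z * fst w - snd z * snd w, fst z * snd w + snd z * fst w).
Definition Copp (z : CC) : CC := (- fst z, - snd z).
Definition Cconj (z : CC) : CC := (fst z, - snd z).
Definition Cabs (z : CC) : R := sqrt (fst z * fst z + snd z * snd z).

Record CStarAlgebra := {
  car :> Type;
  zero : car; one : car;
  add : car -> car -> car; opp : car -> car; mul : car -> car -> car;
  scal : CC -> car -> car; star : car -> car; norm : car -> R;
  addA : forall x y z, add x (add y z) = add (add x y) z;
  addC : forall x y, add x y = add y x;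
  add0 : forall x, add zero x = x;
  addN : forall x, add (opp x) x = zero;
  scalDr : forall a x y, scal a (add x y) = add (scal a x) (scal a y);
  scalDl : forall a b x, scal (Cadd a b) x = add (scal a x) (scal b x);
  scalA : forall a b x, scal a (scal b x) = scal (Cmul a b) x;
  scal1 : forall x, scal C1 x = x;
  mulA : forall x y z, mul x (mul y z) = mul (mul x y) z;
  mul1l : forall x, mul one x = x;
  mul1r : forall x, mul x one = x;
  mulDl : forall x y z, mul (add x y) z = add (mul x z) (mul y z);
  mulDr : forall x y z, mul x (add y z) = add (mul x y) (mul x z);
  scalMl : forall a x y, scal a (mul x y) = mul (scal a x) y;
  scalMr : forall a x y, scal a (mul x y) = mul x (scal a y);
  starK : forall x, star (star x) = x;
  starD : forall x y, star (add x y) = add (star x) (star y);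
  starZ : forall a x, star (scal a x) = scal (Cconj a) (star x);
  starM : forall x y, star (mul x y) = mul (star y) (star x);
  norm_eq0 : forall x, norm x = 0 -> x = zero;
  norm_triangle : forall x y, norm (add x y) <= norm x + norm y;
  normZ : forall a x, norm (scal a x) = Cabs a * norm x;
  normM : forall x y, norm (mul x y) <= norm x * norm y;
  complete : forall u : nat -> car,
    (forall eps, eps > 0 -> exists N, forall n m, (n >= N)%nat -> (m >= N)%nat ->
        norm (add (u n) (opp (u m))) < eps) ->
    exists l, forall eps, eps > 0 -> exists N, forall n, (n >= N)%nat ->
        norm (add (u n) (opp l)) < eps;
  cstar_id : forall x, norm (mul (star x) x) = norm x * norm x
}.

Section Defs.
Variable A : CStarAlgebra.

Definition converges (u : nat -> A) (l : A) : Prop :=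
  forall eps, eps > 0 -> exists N, forall n, (n >= N)%nat ->
    norm A (add A (u n) (opp A l)) < eps.

Definition is_comm_unital_subalg (C : A -> Prop) : Prop :=
  C (one A) /\
  (forall x y, C x -> C y -> C (add A x y)) /\
  (forall a x, C x -> C (scal A a x)) /\
  (forall x y, C x -> C y -> C (mul A x y)) /\
  (forall x, C x -> C (star A x)) /\
  (forall u l, (forall n, C (u n)) -> converges u l -> C l) /\
  (forall x y, C x -> C y -> mul A x y = mul A y x).

Definition CA : Type := { C : A -> Prop | is_comm_unital_subalg C }.

Definition subalg_le (C C' : CA) : Prop := forall a, proj1_sig C a -> proj1_sig C' a.

(* Gelfand spectrum of C: nonzero multiplicative linear functionals on C.
   A functional on C is encoded as a function A -> CC which vanishes outside C. *)
Definition is_character (C : A -> Prop) (l : A -> CC) : Prop :=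
  (forall x y, C x -> C y -> l (add A x y) = Cadd (l x) (l y)) /\
  (forall a x, C x -> l (scal A a x) = Cmul a (l x)) /\
  (forall x y, C x -> C y -> l (mul A x y) = Cmul (l x) (l y)) /\
  (exists x, C x /\ l x <> C0) /\
  (forall x, ~ C x -> l x = C0).

Definition Spec (C : CA) : Type := { l : A -> CC | is_character (proj1_sig C) l }.

Definition spec_open (C : CA) (V : Spec C -> Prop) : Prop :=
  forall l, V l -> exists (s : list A) (eps : R), eps > 0 /\
    (forall a, In a s -> proj1_sig C a) /\
    forall m : Spec C,
      (forall a, In a s ->
         Cabs (Cadd (proj1_sig m a) (Copp (proj1_sig l a))) < eps) -> V m.

Definition restricts (C C' : CA) (l' : Spec C') (l : Spec C) : Prop :=
  forall a, proj1_sig C a -> proj1_sig l' a = proj1_sig l a.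

(* Subsets of Sigma = { (C, l) | C in C(A), l in Spec C }; U C is U_C. *)
Definition SigmaSet : Type := forall C : CA, Spec C -> Prop.

Definition sigma_open (U : SigmaSet) : Prop :=
  (forall C, spec_open (U C)) /\
  (forall (C C' : CA) (l : Spec C) (l' : Spec C'),
      U C l -> subalg_le C C' -> restricts l' l -> U C' l').

Definition sigma_closed (F : SigmaSet) : Prop :=
  sigma_open (fun C l => ~ F C l).

Definition set_eq (U V : SigmaSet) : Prop := forall C l, U C l <-> V C l.
Definition set_union (U V : SigmaSet) : SigmaSet := fun C l => U C l \/ V C l.

Definition irreducible (F : SigmaSet) : Prop :=
  forall F1 F2 : SigmaSet, sigma_closed F1 -> sigma_closed F2 ->
    set_eq F (set_union F1 F2) -> set_eq F F1 \/ set_eq F F2.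

End Defs.

(* Closed sets of Sigma_* are closed under restriction, and the sets
   {(C', l') | C <= C', |pr (l' a) - x| < r} are open for 1-Lipschitz [pr].
   If F is irreducible, two such open sets meeting F must meet inside F.  Two
   points of F_C would be separated by coordinate balls at C, and two
   components C1, C2 with no common upper bound in F by the cones above C1
   and C2.  Conversely, if F = F1 u F2 with points (C1, l1) outside F1 and
   (C2, l2) outside F2, a common upper bound C3 carries a point of F1 or F2,
   whose restriction to C1 or C2 lies in that closed set and, the fibres of F
   being singletons, is l1 or l2. *)
From Stdlib Require Import Reals List.
From Stdlib Require Import Classical ClassicalEpsilon FunctionalExtensionality Lra.
Open Scope R_scope.
Set Implicit Arguments.

Section SigmaStar.
Variable A : CStarAlgebra.

Lemma spec_eq (C : CA A) (l m : Spec C) : proj1_sig l = proj1_sig m -> l = m.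
Proof.
  destruct l as [fl pl], m as [fm pm]; simpl; intros ->.
  f_equal; apply proof_irrelevance.
Qed.

Lemma character_one_neq0 (C : CA A) (l : Spec C) : proj1_sig l (one A) <> C0.
Proof.
  destruct l as [f [fadd [fscal [fmul [[x [hx fx]] fout]]]]]; simpl.
  destruct (proj2_sig C) as [h1 _].
  intro f1; apply fx.
  rewrite <- (mul1r A x), fmul, f1 by assumption.
  unfold Cmul, C0; simpl; f_equal; ring.
Qed.

Lemma restriction_exists (C C' : CA A) (l' : Spec C') :
  subalg_le C C' -> exists l : Spec C, restricts l' l.
Proof.
  intro hle.
  set (f := fun a => if excluded_middle_informative (proj1_sig C a)
                     then proj1_sig l' a else C0).
  destruct (proj2_sig C) as [h1 [hadd [hscal [hmul _]]]].
  destruct (proj2_sig l') as [ladd [lscal [lmul _]]].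
  assert (fC : forall a, proj1_sig C a -> f a = proj1_sig l' a)
    by (intros a ha; unfold f; destruct excluded_middle_informative; tauto).
  assert (fchar : is_character A (proj1_sig C) f).
  { repeat split.
    - intros x y hx hy; rewrite !fC by auto; apply ladd; apply hle; assumption.
    - intros a x hx; rewrite !fC by auto; apply lscal; apply hle; assumption.
    - intros x y hx hy; rewrite !fC by auto; apply lmul; apply hle; assumption.
    - exists (one A); split; [assumption|].
      rewrite fC by assumption; apply character_one_neq0.
    - intros x hx; unfold f; destruct excluded_middle_informative; tauto. }
  exists (exist _ f fchar); intros a ha; symmetry; exact (fC a ha).
Qed.

Lemma sigma_closed_restrict (G : SigmaSet A) (C C' : CA A) (l : Spec C) (l' : Spec C') :
  sigma_closed G -> G C' l' -> subalg_le C C' -> restricts l' l -> G C l.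
Proof.
  intros [_ hup] hg hle hr; apply NNPP; intro hn.
  exact (hup C C' l l' hn hle hr hg).
Qed.

Lemma sigma_closed_diff_open (G O : SigmaSet A) :
  sigma_closed G -> sigma_open O -> sigma_closed (fun C l => G C l /\ ~ O C l).
Proof.
  intros [hG hGup] [hO hOup]; split.
  - intros C l hl; destruct (classic (G C l)) as [hg | hg].
    + assert (ho : O C l) by (apply NNPP; tauto).
      destruct (hO C l ho) as [s [eps [heps [hs hm]]]].
      exists s, eps; repeat split; auto.
      intros m hsm [_ hom]; exact (hom (hm m hsm)).
    + destruct (hG C l hg) as [s [eps [heps [hs hm]]]].
      exists s, eps; repeat split; auto.
      intros m hsm [hgm _]; exact (hm m hsm hgm).
  - intros C C' l l' hl hle hr [hg ho]; destruct (classic (G C l)) as [hgl | hgl].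
    + apply ho; apply (hOup C C' l l'); auto; apply NNPP; tauto.
    + exact (hGup C C' l l' hgl hle hr hg).
Qed.

(* Intersect F with the complements of O1 and O2: these closed sets cover F. *)
Lemma irreducible_open_meet (F O1 O2 : SigmaSet A) :
  sigma_closed F -> irreducible F -> sigma_open O1 -> sigma_open O2 ->
  (forall C l, F C l -> O1 C l -> O2 C l -> False) ->
  (forall C l, F C l -> ~ O1 C l) \/ (forall C l, F C l -> ~ O2 C l).
Proof.
  intros hF hirr hO1 hO2 hdisj.
  destruct (hirr (fun C l => F C l /\ ~ O1 C l) (fun C l => F C l /\ ~ O2 C l)
              (sigma_closed_diff_open hF hO1) (sigma_closed_diff_open hF hO2))
    as [e | e].
  - intros C l; unfold set_union; split.
    + intro hf; destruct (classic (O1 C l)); [right | left]; split; auto.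
      intro; eapply hdisj; eauto.
    + intros [[hf _] | [hf _]]; assumption.
  - left; intros C l hf; exact (proj2 (proj1 (e C l) hf)).
  - right; intros C l hf; exact (proj2 (proj1 (e C l) hf)).
Qed.

Lemma cone_open (D : CA A) : sigma_open (fun C (_ : Spec C) => subalg_le D C).
Proof.
  split.
  - intros C l hl; exists nil, 1; repeat split; [lra | intros a [] | auto].
  - intros C C' l l' hle hle' _ a ha; auto.
Qed.

Definition lipschitz1 (pr : CC -> R) : Prop :=
  forall z w, Rabs (pr z - pr w) <= Cabs (Cadd z (Copp w)).

Lemma lipschitz1_fst : lipschitz1 fst.
Proof.
  intros z w; unfold Cabs, Cadd, Copp; simpl.
  rewrite <- sqrt_Rsqr_abs; apply sqrt_le_1_alt; unfold Rsqr.
  pose proof (Rle_0_sqr (snd z + - snd w)); unfold Rsqr in *; nra.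
Qed.

Lemma lipschitz1_snd : lipschitz1 snd.
Proof.
  intros z w; unfold Cabs, Cadd, Copp; simpl.
  rewrite <- sqrt_Rsqr_abs; apply sqrt_le_1_alt; unfold Rsqr.
  pose proof (Rle_0_sqr (fst z + - fst w)); unfold Rsqr in *; nra.
Qed.

Definition coord_ball (pr : CC -> R) (C : CA A) (a : A) (x r : R) : SigmaSet A :=
  fun C' l' => subalg_le C C' /\ Rdist (pr (proj1_sig l' a)) x < r.

Lemma coord_ball_open (pr : CC -> R) (C : CA A) (a : A) (x r : R) :
  lipschitz1 pr -> proj1_sig C a -> sigma_open (coord_ball pr C a x r).
Proof.
  intros hpr ha; split.
  - intros C' l' [hle hlt].
    exists (a :: nil), (r - Rdist (pr (proj1_sig l' a)) x); split; [lra | split].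
    + intros b [<- | []]; apply hle; assumption.
    + intros m hm; split; [assumption|].
      specialize (hm a (or_introl eq_refl)).
      pose proof (hpr (proj1_sig m a) (proj1_sig l' a)).
      pose proof (Rdist_tri (pr (proj1_sig m a)) x (pr (proj1_sig l' a))).
      unfold Rdist in *; lra.
  - intros C' C'' l' l'' [hle hlt] hle' hr; split.
    + intros b hb; auto.
    + rewrite hr; auto.
Qed.

Lemma irreducible_coord_eq (F : SigmaSet A) (pr : CC -> R) (C : CA A) (a : A)
    (l m : Spec C) :
  sigma_closed F -> irreducible F -> lipschitz1 pr -> proj1_sig C a ->
  F C l -> F C m -> pr (proj1_sig l a) = pr (proj1_sig m a).
Proof.
  intros hF hirr hpr ha hl hm.
  set (x := pr (proj1_sig l a)); set (y := pr (proj1_sig m a)).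
  destruct (Req_dec x y) as [| hxy]; [assumption | exfalso].
  set (d := Rdist x y).
  assert (hd : 0 < d) by (apply Rabs_pos_lt; lra).
  assert (center : forall z, Rdist z z < d / 2)
    by (intro z; rewrite Rdist_eq; lra).
  destruct (irreducible_open_meet hF hirr
              (coord_ball_open C a x (d / 2) hpr ha)
              (coord_ball_open C a y (d / 2) hpr ha)) as [h | h].
  - intros C' l' _ [_ h1] [_ h2].
    pose proof (Rdist_tri x y (pr (proj1_sig l' a))) as htri.
    rewrite (Rdist_sym _ x) in h1; fold d in htri; lra.
  - apply (h C l hl); split; [intros b hb; exact hb | apply center].
  - apply (h C m hm); split; [intros b hb; exact hb | apply center].
Qed.

Lemma irreducible_fibre_eq (F : SigmaSet A) (C : CA A) {l m : Spec C} :
  sigma_closed F -> irreducible F -> F C l -> F C m -> l = m.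
Proof.
  intros hF hirr hl hm; apply spec_eq, functional_extensionality; intro a.
  destruct (classic (proj1_sig C a)) as [ha | ha].
  - apply injective_projections.
    + exact (@irreducible_coord_eq F fst C a l m hF hirr lipschitz1_fst ha hl hm).
    + exact (@irreducible_coord_eq F snd C a l m hF hirr lipschitz1_snd ha hl hm).
  - rewrite (proj2 (proj2 (proj2 (proj2 (proj2_sig l)))) a ha).
    rewrite (proj2 (proj2 (proj2 (proj2 (proj2_sig m)))) a ha).
    reflexivity.
Qed.

Lemma irreducible_directed (F : SigmaSet A) (C1 C2 : CA A) {l1 : Spec C1} {l2 : Spec C2} :
  sigma_closed F -> irreducible F -> F C1 l1 -> F C2 l2 ->
  exists C3 : CA A, subalg_le C1 C3 /\ subalg_le C2 C3 /\ exists l, F C3 l.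
Proof.
  intros hF hirr h1 h2; apply NNPP; intro hno.
  destruct (irreducible_open_meet hF hirr (cone_open C1) (cone_open C2)) as [h | h].
  - intros C l hf c1 c2; apply hno; eauto.
  - apply (h C1 l1 h1); intros b hb; exact hb.
  - apply (h C2 l2 h2); intros b hb; exact hb.
Qed.

Lemma sigma_closed_subset_restrict {F G : SigmaSet A} {C C' : CA A}
    {l : Spec C} {l' : Spec C'} :
  (forall C (l m : Spec C), F C l -> F C m -> l = m) ->
  sigma_closed G -> (forall C l, G C l -> F C l) ->
  F C l -> G C' l' -> subalg_le C C' -> G C l.
Proof.
  intros huniq hG hGF hl hl' hle.
  destruct (restriction_exists l' hle) as [k hk].
  assert (hkG : G C k) by exact (sigma_closed_restrict hG hl' hle hk).
  rewrite (huniq C l k hl (hGF C k hkG)); exact hkG.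
Qed.

Lemma fibres_directed_irreducible (F : SigmaSet A) :
  (forall C (l m : Spec C), F C l -> F C m -> l = m) ->
  (forall C1 C2 (l1 : Spec C1) (l2 : Spec C2), F C1 l1 -> F C2 l2 ->
     exists C3 : CA A, subalg_le C1 C3 /\ subalg_le C2 C3 /\ exists l, F C3 l) ->
  irreducible F.
Proof.
  intros huniq hdir F1 F2 hF1 hF2 e.
  assert (hF1F : forall C l, F1 C l -> F C l) by (intros C l h; apply e; left; exact h).
  assert (hF2F : forall C l, F2 C l -> F C l) by (intros C l h; apply e; right; exact h).
  apply NNPP; intro hn.
  assert (hx1 : exists C l, F C l /\ ~ F1 C l).
  { apply NNPP; intro hc; apply hn; left; intros C l; split; [|apply hF1F].
    intro hf; apply NNPP; intro; apply hc; eauto. }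
  assert (hx2 : exists C l, F C l /\ ~ F2 C l).
  { apply NNPP; intro hc; apply hn; right; intros C l; split; [|apply hF2F].
    intro hf; apply NNPP; intro; apply hc; eauto. }
  destruct hx1 as [C1 [l1 [hf1 hn1]]], hx2 as [C2 [l2 [hf2 hn2]]].
  destruct (hdir C1 C2 l1 l2 hf1 hf2) as [C3 [hle1 [hle2 [l3 hf3]]]].
  destruct (proj1 (e C3 l3) hf3) as [g | g].
  - exact (hn1 (sigma_closed_subset_restrict huniq hF1 hF1F hf1 g hle1)).
  - exact (hn2 (sigma_closed_subset_restrict huniq hF2 hF2F hf2 g hle2)).
Qed.

End SigmaStar.

Theorem lemma2p24 (A : CStarAlgebra) (F : SigmaSet A) (hF : sigma_closed F) :
  irreducible F <->
  ((forall C : CA A, (exists l, F C l) -> exists l, F C l /\ forall m, F C m -> m = l) /\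
   (forall C1 C2 : CA A, (exists l, F C1 l) -> (exists l, F C2 l) ->
      exists C3 : CA A, subalg_le C1 C3 /\ subalg_le C2 C3 /\ exists l, F C3 l)).
Proof.
  split.
  - intro hirr; split.
    + intros C [l hl]; exists l; split; [exact hl|].
      intros m hm; exact (irreducible_fibre_eq hF hirr hm hl).
    + intros C1 C2 [l1 h1] [l2 h2]; exact (irreducible_directed hF hirr h1 h2).
  - intros [hsingle hdir]; apply fibres_directed_irreducible.
    + intros C l m hl hm.
      destruct (hsingle C (ex_intro _ l hl)) as [k [_ hk]].
      rewrite (hk l hl), (hk m hm); reflexivity.
    + intros C1 C2 l1 l2 h1 h2; exact (hdir C1 C2 (ex_intro _ l1 h1) (ex_intro _ l2 h2)).
Qed.
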